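(* Assume $q\neq0$. For every integer $n$, $$h_{n-2}h_{n-1}h_{n+1}h_{n+2}-h_n^4=Ed^2q^{n-2}\left[\left(p^2+q\right)h_n^2+Ed^2p^2q^{n-1}\right].$$
   Context: Let $p,q,a,b$ be complex numbers with $q\neq0$, let $d^2=p^2-4q$ and $E=b^2-abp+a^2q$. The Horadam-Lucas sequence $(h_n)$ is defined by $h_0=2b-ap$, $h_1=bp-2aq$, $h_n=ph_{n-1}-qh_{n-2}$. It is extended to all integer indices by $h_{n-2}=(ph_{n-1}-h_n)/q$. *)

From HB Require Import structures.
From mathcomp Require Import all_boot all_order all_algebra.
From mathcomp Require Import complex.
Set Implicit Arguments. Unset Strict Implicit. Unset Printing Implicit Defensive.
Import Order.TTheory GRing.Theory Num.Theory.
Local Open Scope ring_scope.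

Section Horadam.
Variable F : fieldType.
Variables p q a b : F.

(* forward: pair (h_n, h_{n+1}) for n : nat *)
Fixpoint hfwd (n : nat) : F * F :=
  match n with
  | 0%N => (2 * b - a * p, b * p - 2 * a * q)
  | k.+1 => let: (x, y) := hfwd k in (y, p * y - q * x)
  end.

(* backward: pair (h_{-n}, h_{-n+1}) for n : nat, via h_{m-2} = (p h_{m-1} - h_m)/q *)
Fixpoint hbwd (n : nat) : F * F :=
  match n with
  | 0%N => (2 * b - a * p, b * p - 2 * a * q)
  | k.+1 => let: (x, y) := hbwd k in ((p * x - y) / q, x)
  end.

Definition hl (n : int) : F :=
  match n with
  | Posz k => (hfwd k).1
  | Negz k => (hbwd k.+1).1
  end.
End Horadam.

(** Every solution of [u (m + 2) = p u (m + 1) - q u m] has the Cassini form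
    [W m = u (m + 1)^2 - p u m u (m + 1) + q u m^2], which is multiplied by [q]
    at each step, so [W m = q^m W 0]; for the Horadam-Lucas sequence
    [W 0 = - E d^2]. Eliminating [u (n - 2)], [u (n - 1)] and [u (n + 2)] with
    the recurrence expresses the left-hand side through [u n] and [W n] alone. *)

From HB Require Import structures.
From mathcomp Require Import all_boot all_order all_algebra.
From mathcomp Require Import complex ring zify.
Import Order.TTheory GRing.Theory Num.Theory.
Set Implicit Arguments. Unset Strict Implicit.
Local Open Scope ring_scope.

Section LinearRecurrence.
Variable F : fieldType.
Variables p q : F.
Variable u : int -> F.

Definition cassini (m : int) : F :=
  u (m + 1) ^+ 2 - p * u m * u (m + 1) + q * u m ^+ 2.

Hypothesis u_rec : forall m, u (m + 2) = p * u (m + 1) - q * u m.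

Lemma cassiniS m : cassini (m + 1) = q * cassini m.
Proof.
have m2E : m + 1 + 1 = m + 2 by rewrite -addrA.
by rewrite /cassini m2E u_rec; ring.
Qed.

Hypothesis q_neq0 : q != 0.

Lemma rec_pred m : u (m - 1) = (p * u m - u (m + 1)) / q.
Proof.
have := u_rec (m - 1); rewrite -!addrA /= addNr addr0 => ->.
by field.
Qed.

Lemma cassini_expz m : cassini m = q ^ m * cassini 0.
Proof.
suff cassini_nat (k : nat) : cassini k = q ^ k * cassini 0 /\
                     cassini (- k%:Z) = q ^ (- k%:Z) * cassini 0.
  by case: m => k; [case: (cassini_nat k) | rewrite NegzE; case: (cassini_nat k.+1)].
elim: k => [|k [IHp IHn]]; first by rewrite oppr0 expr0z mul1r.
have Sk : Posz k.+1 = k%:Z + 1 by lia.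
have Nk : - k%:Z = - (k.+1)%:Z + 1 by lia.
split; first by rewrite Sk cassiniS IHp expfzDr // expr1z; ring.
move: IHn; rewrite Nk cassiniS expfzDr // expr1z => IHn.
by apply: (mulfI q_neq0); rewrite IHn; ring.
Qed.

Lemma quartic_cassini n :
  u (n - 2) * u (n - 1) * u (n + 1) * u (n + 2) - u n ^+ 4
  = - cassini n / q ^+ 2 * ((p ^+ 2 + q) * u n ^+ 2 - p ^+ 2 * cassini n / q).
Proof.
have n2E : n - 2 = n - 1 - 1 by rewrite -addrA.
have n1E : n - 1 + 1 = n by rewrite -addrA addNr addr0.
rewrite n2E rec_pred n1E rec_pred u_rec /cassini.
by field.
Qed.

End LinearRecurrence.

Section HoradamLucas.
Variable F : fieldType.
Variables p q a b : F.
Hypothesis q_neq0 : q != 0.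
Let h := hl p q a b.

Lemma hfwdS k : hfwd p q a b k.+1 =
  ((hfwd p q a b k).2, p * (hfwd p q a b k).2 - q * (hfwd p q a b k).1).
Proof. by rewrite /=; case: (hfwd p q a b k). Qed.

Lemma hbwdS k : hbwd p q a b k.+1 =
  ((p * (hbwd p q a b k).1 - (hbwd p q a b k).2) / q, (hbwd p q a b k).1).
Proof. by rewrite /=; case: (hbwd p q a b k). Qed.

Lemma hl_rec m : h (m + 2) = p * h (m + 1) - q * h m.
Proof.
case: m => [k|[|[|k]]].
- have -> : Posz k + 2 = Posz k.+2 by lia.
  have -> : Posz k + 1 = Posz k.+1 by lia.
  by rewrite /h /hl !hfwdS.
- have -> : Negz 0 + 2 = 1 by [].
  have -> : Negz 0 + 1 = 0 by [].
  by rewrite /h /hl hbwdS /=; field.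
- have -> : Negz 1 + 2 = 0 by [].
  have -> : Negz 1 + 1 = Negz 0 by [].
  by rewrite /h /hl !hbwdS /=; field.
- have -> : Negz k.+2 + 2 = Negz k by lia.
  have -> : Negz k.+2 + 1 = Negz k.+1 by lia.
  by rewrite /h /hl [hbwd _ _ _ _ k.+3]hbwdS [hbwd _ _ _ _ k.+2]hbwdS /=; field.
Qed.

Lemma hl_cassini0 :
  cassini p q h 0 = - ((b ^+ 2 - a * b * p + a ^+ 2 * q) * (p ^+ 2 - 4%:R * q)).
Proof. by rewrite /cassini /h /=; ring. Qed.

End HoradamLucas.

Local Open Scope complex_scope.
Theorem mainTheorem10 (R : rcfType) (p q a b : R[i]) (n : int) :
  q != 0 ->
  let d2 := p ^+ 2 - 4%:R * q in
  let E := b ^+ 2 - a * b * p + a ^+ 2 * q in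
  let h := hl p q a b in
  h (n - 2) * h (n - 1) * h (n + 1) * h (n + 2) - h n ^+ 4
  = E * d2 * q ^ (n - 2)
    * ((p ^+ 2 + q) * h n ^+ 2 + E * d2 * p ^+ 2 * q ^ (n - 1)).
Proof.
move=> q_neq0 d2 E h.
have h_rec : forall m, h (m + 2) = p * h (m + 1) - q * h m.
  exact: hl_rec.
have cassiniE : cassini p q h n = - (E * d2) * q ^ n.
  by rewrite (cassini_expz h_rec q_neq0) hl_cassini0 mulrC.
have qn2 : q ^ (n - 2) = q ^ n / q ^+ 2.
  by rewrite expfzDr // -exprz_inv -invr_expz.
have qn1 : q ^ (n - 1) = q ^ n / q.
  by rewrite expfzDr // expN1z.
rewrite (quartic_cassini h_rec q_neq0) cassiniE qn2 qn1.
by field.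
Qed.
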